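(* Let $q,k\geq 0$ and let $\vec{x}=(x_0,\ldots,x_k)$ be a vector of nonnegative integers. Paul has a winning strategy for the $q$-round pathological liar game with $k$ lies and initial state $\vec{x}$ if and only if there exists an $\vec{x}$-covering of $Q_q$. Similarly, Paul has a winning strategy for the $q$-round original liar game with $k$ lies and initial state $\vec{x}$ if and only if there exists an $\vec{x}$-packing of $Q_q$.
   Context: Liar games: a state is $\vec{x}=(x_0,\ldots,x_k)$ of nonnegative integers ($x_i$ = number of elements carrying $i$ lies). In each of $q$ rounds Paul chooses a legal question $\vec{a}=(a_0,\ldots,a_k)$ with integers $0\leq a_i\leq x_i$, and Carole answers Y or N; the new state is $Y(\vec{x},\vec{a})=(a_0,\,a_1+x_0-a_0,\,\ldots,\,a_k+x_{k-1}-a_{k-1})$ or $N(\vec{x},\vec{a})=(x_0-a_0,\,x_1-a_1+a_0,\,\ldots,\,x_k-a_k+a_{k-1})$ respectively. In the pathological game Paul wins iff after $q$ rounds $\sum_i x_i\geq 1$; in the original game Paul wins iff after $q$ rounds $\sum_i x_i\leq 1$. Hypercube: $Q_q=\{Y,N\}^q$, with complementation $\overline{Y}=N$, $\overline{N}=Y$. For $i\geq 0$ let $\binom{[q]}{\leq i}$ be the family of subsets of $[q]=\{1,\ldots,q\}$ of size at most $i$. An $i$-quasiball in $Q_q$ is the image $f(\binom{[q]}{\leq i})$ of an injective map $f:\binom{[q]}{\leq i}\to Q_q$ with the property: whenever $A=\{p_1,\ldots,p_{|A|}\}$ and $B=\{p_1,\ldots,p_{|A|},p_{|A|+1},\ldots,p_{|B|}\}$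 lie in $\binom{[q]}{\leq i}$ with $p_1<\cdots<p_{|A|}<p_{|A|+1}<\cdots<p_{|B|}$ and $|B|>|A|$, and $f(A)=\omega_1\cdots\omega_q$, then $f(B)=\omega_1\cdots\omega_{p_{|A|+1}-1}\,\overline{\omega}_{p_{|A|+1}}\,\omega'_{p_{|A|+1}+1}\cdots\omega'_q$ for some arbitrary $\omega'_{p_{|A|+1}+1}\cdots\omega'_q\in\{Y,N\}^{q-p_{|A|+1}}$ (i.e. $f(B)$ agrees with $f(A)$ before position $p_{|A|+1}$ and differs from it at that position). An $\vec{x}$-covering of $Q_q$ is a collection consisting of $x_i$ $(k-i)$-quasiballs for each $0\leq i\leq k$ whose union is $Q_q$; an $\vec{x}$-packing of $Q_q$ is such a collection whose members are pairwise disjoint (the union need not be $Q_q$). *)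

From mathcomp Require Import all_boot all_order.
Set Implicit Arguments. Unset Strict Implicit. Unset Printing Implicit Defensive.

(* A state for k lies is x : {ffun 'I_k.+1 -> nat}, x i = number of elements
   carrying i lies. *)
Definition state (k : nat) := {ffun 'I_k.+1 -> nat}.

Definition legal (k : nat) (x a : state k) : Prop := forall i, a i <= x i.

Definition yes_state (k : nat) (x a : state k) : state k :=
  [ffun i : 'I_k.+1 => a i +
     (if nat_of_ord i == 0 then 0 else x (inord i.-1) - a (inord i.-1))].

Definition no_state (k : nat) (x a : state k) : state k :=
  [ffun i : 'I_k.+1 => (x i - a i) +
     (if nat_of_ord i == 0 then 0 else a (inord i.-1))].

Definition weight (k : nat) (x : state k) : nat := \sum_(i < k.+1) x i.

Fixpoint path_win (k q : nat) (x : state k) : Prop :=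
  match q with
  | 0 => 1 <= weight x
  | q'.+1 => exists a : state k, legal x a /\
               path_win q' (yes_state x a) /\ path_win q' (no_state x a)
  end.

Fixpoint orig_win (k q : nat) (x : state k) : Prop :=
  match q with
  | 0 => weight x <= 1
  | q'.+1 => exists a : state k, legal x a /\
               orig_win q' (yes_state x a) /\ orig_win q' (no_state x a)
  end.

(* Q_q = {Y,N}^q, encoded as q-tuples of booleans (true = Y, false = N);
   position p in {1..q} is the index p-1 : 'I_q. Complementation is negb. *)
Definition cube (q : nat) := (q.-tuple bool)%type.

Definition small_sets (q i : nat) : {set {set 'I_q}} := [set A : {set 'I_q} | #|A| <= i].

(* A and B with A = {p_1<...<p_|A|}, B = {p_1<...<p_|B|}, |B| > |A|:
   A is a proper subset of B and all elements of A are below those of B\A. *)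
Definition init_seg (q : nat) (A B : {set 'I_q}) : Prop :=
  A \proper B /\ (forall a b, a \in A -> b \in B :\: A -> a < b).

(* The quasiball condition on f : subsets -> Q_q, on the domain of sets of
   size <= i: for such A, B and p = p_{|A|+1} (= the least element of B\A),
   f(B) agrees with f(A) strictly before p and differs at p. *)
Definition quasiball_map (q i : nat) (f : {set 'I_q} -> cube q) : Prop :=
  {in small_sets q i &, injective f} /\
  forall A B : {set 'I_q}, A \in small_sets q i -> B \in small_sets q i ->
    init_seg A B ->
    forall p : 'I_q, p \in B :\: A -> (forall b, b \in B :\: A -> p <= b) ->
      (forall j : 'I_q, j < p -> tnth (f B) j = tnth (f A) j) /\
      tnth (f B) p = ~~ tnth (f A) p.

Definition is_quasiball (q i : nat) (S : {set cube q}) : Prop :=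
  exists f : {set 'I_q} -> cube q, quasiball_map i f /\ S = f @: small_sets q i.

Definition ball_family (q k : nat) (x : state k)
  (B : forall i : 'I_k.+1, 'I_(x i) -> {set cube q}) : Prop :=
  forall (i : 'I_k.+1) (u : 'I_(x i)), is_quasiball (k - i) (B i u).

Definition is_covering (q k : nat) (x : state k)
  (B : forall i : 'I_k.+1, 'I_(x i) -> {set cube q}) : Prop :=
  ball_family B /\
  forall w : cube q, exists (i : 'I_k.+1) (u : 'I_(x i)), w \in B i u.

Definition is_packing (q k : nat) (x : state k)
  (B : forall i : 'I_k.+1, 'I_(x i) -> {set cube q}) : Prop :=
  ball_family B /\
  forall (i j : 'I_k.+1) (u : 'I_(x i)) (v : 'I_(x j)),
    (i != j) || (nat_of_ord u != nat_of_ord v) -> [disjoint B i u & B j v].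

(* Record a family of balls as a list of pairs (j, S): an element with j lies
   and its ball S, a (k-j)-quasiball.  Let h be the first letter of the centre f(set0) of a
   quasiball S of Q_{q+1}.  The words of S starting with c form, once that letter is deleted,
   a quasiball of Q_q of the same radius if c = h and of radius one less otherwise, and
   conversely two such slices glue back into a quasiball: this is exactly how an element with
   j lies moves to j + (h xor c) lies when Carole answers c.  Hence a family for x on Q_{q+1}
   splits, with a_i the number of level-i balls with h = Y, into families for Y(x,a) and
   N(x,a) on Q_q, and any such pair of families glues back to a family for x; the number of
   balls containing the word c.w is the number of balls of the c-family containing w.
   Coverings and packings are the families in which this number is everywhere >= 1, resp.
   <= 1, and on Q_0 it is the number of surviving elements, which is the winning condition
   of the pathological, resp. original, game. *)

From mathcomp Require Import all_boot all_order.
From mathcomp Require Import zify.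
Set Implicit Arguments. Unset Strict Implicit. Unset Printing Implicit Defensive.

Lemma exists_min_diff n (A A' : {set 'I_n}) : A \proper A' ->
  exists2 p : 'I_n, p \in A' :\: A & forall b : 'I_n, b \in A' :\: A -> p <= b.
Proof.
case/properP=> _ [y yA' yA].
have yD : y \in A' :\: A by rewrite inE yA yA'.
by case: (arg_minnP (fun j : 'I_n => nat_of_ord j) yD) => p; exists p.
Qed.

Lemma behead_cons_tuple n T x (t : n.-tuple T) : behead_tuple [tuple of x :: t] = t.
Proof. exact: val_inj. Qed.

Lemma eq_from_thead_behead n T (t t' : n.+1.-tuple T) :
  thead t = thead t' -> behead_tuple t = behead_tuple t' -> t = t'.
Proof.
case/tupleP: t => x t; case/tupleP: t' => x' t'.
by rewrite !theadE !behead_cons_tuple => -> ->.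
Qed.

Lemma tnth_behead_lift n T (t : n.+1.-tuple T) j :
  tnth (behead_tuple t) j = tnth t (lift ord0 j).
Proof.
rewrite tnth_behead; congr tnth; apply: val_inj.
by rewrite /= /bump leq0n inordK /= ?ltnS.
Qed.

Lemma count_enum_card (T : finType) (P : pred T) : count P (enum T) = #|P|.
Proof. by rewrite cardE enumT /enum_mem size_filter. Qed.

Lemma card_nth (T : Type) (x0 : T) (L : seq T) n (P : pred T) :
  n = size L -> #|[pred u : 'I_n | P (nth x0 L u)]| = count P L.
Proof.
move->; rewrite -sum1_card -sum1_count (big_nth x0) big_mkord.
by apply: eq_bigl.
Qed.

(** * Slicing and gluing quasiballs *)

Section ShiftSet.
Variable q : nat.
Implicit Types (c : bool) (A : {set 'I_q}) (B : {set 'I_q.+1}).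

Definition shift_set c A : {set 'I_q.+1} :=
  [set j | if unlift ord0 j is Some j' then j' \in A else c].
Definition unshift_set B : {set 'I_q} := [set j | lift ord0 j \in B].

Lemma shift_set0 c A : (ord0 \in shift_set c A) = c.
Proof. by rewrite inE unlift_none. Qed.

Lemma mem_shift_set c A j : (lift ord0 j \in shift_set c A) = (j \in A).
Proof. by rewrite inE liftK. Qed.

Lemma shift_setK c A : unshift_set (shift_set c A) = A.
Proof. by apply/setP=> j; rewrite inE mem_shift_set. Qed.

Lemma unshift_setK B : shift_set (ord0 \in B) (unshift_set B) = B.
Proof.
apply/setP=> j; case: (unliftP ord0 j) => [j' ->|->]; last by rewrite shift_set0.
by rewrite mem_shift_set inE.
Qed.

Lemma card_shift_set c A : #|shift_set c A| = c + #|A|.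
Proof.
rewrite (cardsD1 ord0) shift_set0 -(card_imset A (@lift_inj _ ord0)); congr (_ + _).
apply: eq_card => j; rewrite in_setD1; case: (unliftP ord0 j) => [j' ->|->].
  by rewrite mem_shift_set (mem_imset _ _ (@lift_inj _ ord0)) eq_sym neq_lift.
by rewrite eqxx; apply/esym/imsetP=> -[j' _ /eqP]; rewrite (negbTE (neq_lift _ _)).
Qed.

Lemma small_shift_set c A r :
  (shift_set c A \in small_sets q.+1 r) = (c <= r) && (A \in small_sets q (r - c)).
Proof. by rewrite !inE card_shift_set; case: c => /=; lia. Qed.

Lemma mem_shift_setD c A A' j :
  (j \in shift_set c A' :\: shift_set c A) =
  if unlift ord0 j is Some j' then j' \in A' :\: A else false.
Proof. by rewrite !inE; case: unlift => [j'|]; rewrite ?inE ?andNb. Qed.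

Lemma init_seg_shift c A A' : init_seg (shift_set c A) (shift_set c A') <-> init_seg A A'.
Proof.
rewrite /init_seg !properEneq.
have sub : (shift_set c A \subset shift_set c A') = (A \subset A').
  apply/subsetP/subsetP=> sAA' j; first by rewrite -!(mem_shift_set c); apply: sAA'.
  by rewrite !inE; case: unlift => // j'; apply: sAA'.
rewrite (inj_eq (can_inj (@shift_setK c))) sub; split=> -[-> lt]; split=> // a b.
  move=> aA bD; have := lt (lift ord0 a) (lift ord0 b).
  by rewrite mem_shift_set mem_shift_setD liftK !lift0 => /(_ aA bD).
rewrite mem_shift_setD; case: (unliftP ord0 b) => // b' -> aA bD.
case: (unliftP ord0 a) aA => [a' ->|->]; rewrite ?mem_shift_set !lift0 // => aA.
exact: lt a' b' aA bD.
Qed.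

Lemma small_unshift_set B r :
  (B \in small_sets q.+1 r) =
  ((ord0 \in B) <= r) && (unshift_set B \in small_sets q (r - (ord0 \in B))).
Proof. by rewrite -{1}(unshift_setK B) small_shift_set. Qed.

Lemma init_seg_unshift B B' : (ord0 \in B) = (ord0 \in B') ->
  init_seg B B' -> init_seg (unshift_set B) (unshift_set B').
Proof. by move=> e; rewrite -(init_seg_shift (ord0 \in B)) {2}e !unshift_setK. Qed.

End ShiftSet.

Definition slice q (c : bool) (S : {set cube q.+1}) : {set cube q} :=
  [set w : cube q | [tuple of c :: w] \in S].

Definition glue q (T : bool -> {set cube q}) : {set cube q.+1} :=
  [set w : cube q.+1 | behead_tuple w \in T (thead w)].

Lemma mem_glue q c (w : cube q) (T : bool -> {set cube q}) :
  ([tuple of c :: w] \in glue T) = (w \in T c).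
Proof. by rewrite inE theadE behead_cons_tuple. Qed.

Lemma eq_glue q (T T' : bool -> {set cube q}) : T =1 T' -> glue T = glue T'.
Proof. by move=> eT; apply/setP=> w; rewrite !inE eT. Qed.

Lemma quasiball_cube0 r (S : {set cube 0}) : is_quasiball r S <-> S = setT.
Proof.
split=> [[f [_ ->]] | ->].
  apply/setP=> w; rewrite !inE [w]tuple0; apply/imsetP; exists set0.
    by rewrite inE cards0.
  by rewrite [f set0]tuple0.
exists (fun _ => [tuple]); split.
  split=> [A B _ _ _ | A B _ _ _ [] //]; by apply/setP=> -[].
apply/setP=> w; rewrite !inE [w]tuple0; apply/esym/imsetP; exists set0 => //.
by rewrite inE cards0.
Qed.

(* Once j > k the element is eliminated, and its ball is empty. *)
Definition ball_at q (k j : nat) (S : {set cube q}) : Prop :=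
  if j <= k then is_quasiball (k - j) S else S = set0.

Section QuasiballMap.
Variables (q r : nat) (f : {set 'I_q.+1} -> cube q.+1).
Hypothesis hf : quasiball_map r f.

Lemma quasiball_head B : B \in small_sets q.+1 r ->
  thead (f B) = thead (f set0) (+) (ord0 \in B).
Proof.
move=> sB; have [_ step] := hf.
have s0 : set0 \in small_sets q.+1 r by rewrite inE cards0.
have [->|[y yB]] := set_0Vmem B; first by rewrite inE addbF.
have ini : init_seg set0 B.
  split=> [|a b]; last by rewrite inE.
  by apply/properP; split; [apply: sub0set | exists y; rewrite ?inE].
have [p pD pmin] := exists_min_diff ini.1.
have [agree differ] := step _ _ s0 sB ini p pD pmin.
rewrite setD0 in pD pmin; rewrite /thead.
case: (unliftP ord0 p) => [p' eq_p | eq_p].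
  have /negbTE -> : ord0 \notin B by apply/negP => /pmin; rewrite eq_p lift0.
  by rewrite addbF; apply: agree; rewrite eq_p lift0.
by rewrite -eq_p pD addbT.
Qed.

Definition restrict_map (d : bool) (A : {set 'I_q}) : cube q :=
  behead_tuple (f (shift_set d A)).

Lemma restrict_quasiball_map (d : bool) : d <= r -> quasiball_map (r - d) (restrict_map d).
Proof.
move=> dr; have [finj step] := hf.
have small_shift A : A \in small_sets q (r - d) -> shift_set d A \in small_sets q.+1 r.
  by rewrite small_shift_set dr.
split=> [A A' sA sA' eq_tail | A A' sA sA' ini p pD pmin].
  rewrite -(shift_setK d A) -(shift_setK d A'); congr unshift_set.
  apply: finj; try exact: small_shift.
  apply: eq_from_thead_behead; last exact: eq_tail.
  by rewrite !(quasiball_head (small_shift _ _)) // !shift_set0.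
have pD' : lift ord0 p \in shift_set d A' :\: shift_set d A by rewrite mem_shift_setD liftK.
have pmin' b : b \in shift_set d A' :\: shift_set d A -> lift ord0 p <= b.
  by rewrite mem_shift_setD; case: (unliftP ord0 b) => // b' -> /pmin; rewrite !lift0.
have [agree differ] := step _ _ (small_shift _ sA) (small_shift _ sA')
  ((init_seg_shift d A A').2 ini) _ pD' pmin'.
split=> [j jp|]; rewrite !tnth_behead_lift //.
by apply: agree; rewrite !lift0.
Qed.

Lemma slice_image c (d := thead (f set0) (+) c) :
  slice c (f @: small_sets q.+1 r) =
  if d <= r then restrict_map d @: small_sets q (r - d) else set0.
Proof.
apply/setP=> w; rewrite inE; apply/imsetP/idP => [[B sB eq_w] | ].
  have hB := quasiball_head sB; rewrite -eq_w theadE in hB.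
  have {hB} <- : ord0 \in B = d by rewrite /d hB addKb.
  move: sB; rewrite small_unshift_set => /andP[-> sU].
  apply/imsetP; exists (unshift_set B) => //.
  by rewrite /restrict_map unshift_setK -eq_w behead_cons_tuple.
case: ifP => [dr /imsetP[A sA ->] | _]; last by rewrite inE.
have sB : shift_set d A \in small_sets q.+1 r by rewrite small_shift_set dr.
exists (shift_set d A) => //.
apply: eq_from_thead_behead; last by rewrite behead_cons_tuple.
by rewrite theadE quasiball_head // shift_set0 /d addKb.
Qed.

End QuasiballMap.

Section GlueMap.
Variables (q r : nat) (h : bool) (g : bool -> {set 'I_q} -> cube q).
Hypothesis hg : forall d : bool, d <= r -> quasiball_map (r - d) (g d).

Definition glue_map (B : {set 'I_q.+1}) : cube q.+1 :=
  [tuple of h (+) (ord0 \in B) :: g (ord0 \in B) (unshift_set B)].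

Lemma glue_quasiball_map : quasiball_map r glue_map.
Proof.
split=> [B B' sB sB' eq_w | A A' sA sA' ini p pD pmin].
  have e0 : (ord0 \in B) = (ord0 \in B').
    by move/(congr1 (@thead _ _)): eq_w; rewrite !theadE => /addbI.
  move: sB sB'; rewrite !small_unshift_set -e0 => /andP[dr sU] /andP[_ sU'].
  have [ginj _] := hg dr.
  rewrite -(unshift_setK B) -(unshift_setK B') -e0 (ginj _ _ sU sU') //.
  by move/(congr1 (@behead_tuple _ _)): eq_w; rewrite !behead_cons_tuple e0.
have [/properP[sAA' _] _] := ini.
case: (unliftP ord0 p) pD pmin => [p' -> | ->] pD pmin; last first.
  move: pD; rewrite inE => /andP[/negbTE nA A'0].
  by split=> // ; rewrite !tnth0 nA A'0 addbT addbF.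
have e0 : (ord0 \in A) = (ord0 \in A').
  apply/idP/idP => [/(subsetP sAA') //|A'0]; apply: contraTT isT => nA.
  by have := pmin ord0; rewrite inE nA A'0 lift0 => /(_ isT).
move: sA sA' (init_seg_unshift e0 ini).
rewrite !small_unshift_set -e0 => /andP[dr sU] /andP[_ sU'] {}ini.
have [_ gstep] := hg dr.
have pD' : p' \in unshift_set A' :\: unshift_set A by rewrite !inE -in_setD.
have pmin' b : b \in unshift_set A' :\: unshift_set A -> p' <= b.
  by rewrite !inE -in_setD => /pmin; rewrite !lift0.
have [agree differ] := gstep _ _ sU sU' ini _ pD' pmin'.
split=> [j|]; last by rewrite /glue_map !tnthS -e0.
case: (unliftP ord0 j) => [j' ->|->]; last by rewrite !tnth0 e0.
by rewrite !lift0 !tnthS -e0 => /agree.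
Qed.

Lemma glue_image :
  glue_map @: small_sets q.+1 r =
  glue (fun c => if h (+) c <= r then g (h (+) c) @: small_sets q (r - (h (+) c))
                 else set0).
Proof.
apply/setP=> w; rewrite inE; apply/imsetP/idP => [[B sB ->] | ].
  rewrite /= theadE addKb; move: sB.
  rewrite small_unshift_set => /andP[-> sU].
  by rewrite behead_cons_tuple; apply: imset_f.
case: ifP => [dr /imsetP[A sA eq_w] | _]; last by rewrite inE.
exists (shift_set (h (+) thead w) A); first by rewrite small_shift_set dr.
apply: eq_from_thead_behead; first by rewrite theadE shift_set0 addKb.
by rewrite behead_cons_tuple shift_set0 shift_setK -eq_w.
Qed.

End GlueMap.

(* h is the first letter of the centre; the answer c costs h (+) c lies. *)
Lemma quasiball_slice q r (S : {set cube q.+1}) :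
  is_quasiball r S -> exists h, forall c, ball_at r (h (+) c) (slice c S).
Proof.
case=> f [hf ->]; exists (thead (f set0)) => c; rewrite slice_image // /ball_at.
case: ifP => dr; rewrite dr //; exists (restrict_map f (thead (f set0) (+) c)).
by split=> //; apply: restrict_quasiball_map.
Qed.

Lemma quasiball_glue q r h (T : bool -> {set cube q}) :
  (forall c, ball_at r (h (+) c) (T c)) -> is_quasiball r (glue T).
Proof.
move=> hT.
have /fin_all_exists[g hg] : forall d : bool, exists g : {set 'I_q} -> cube q,
    d <= r -> quasiball_map (r - d) g /\ T (h (+) d) = g @: small_sets q (r - d).
  move=> d; have := hT (h (+) d); rewrite /ball_at addKb.
  case: ifP => [_ [g [hg ->]] | _ _]; first by exists g.
  by exists (fun _ => [tuple of nseq q false]).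
have gball (d : bool) : d <= r -> quasiball_map (r - d) (g d) by case/hg.
exists (glue_map h g); split; first exact: glue_quasiball_map.
rewrite glue_image //.
apply: eq_glue => c /=; have := hT c; rewrite /ball_at.
by case: ifP => [/hg[_ <-] _ | _ ->]; rewrite ?addKb.
Qed.

(** * Families of balls *)

Section Families.
Variable k : nat.
Implicit Types (x a : state k) (i j : nat).

Definition add_at x i n : state k := [ffun j => x j + n * (j == i :> nat)].

Definition side_state (c : bool) x a : state k :=
  if c then yes_state x a else no_state x a.

Lemma add_at_inj x y i n : add_at x i n = add_at y i n -> x = y.
Proof. by move/ffunP=> e; apply/ffunP=> j; move: (e j); rewrite !ffunE => /addIn. Qed.

Lemma add_at_out x i n : k < i -> add_at x i n = x.
Proof.
move=> ki; apply/ffunP=> j; rewrite ffunE.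
by case: eqP => [eji | _]; [have := ltn_ord j; lia | rewrite muln0 addn0].
Qed.

Lemma side_state_add c x a i (h : bool) : legal x a ->
  side_state c (add_at x i 1) (add_at a i h) = add_at (side_state c x a) (i + (h (+) c)) 1.
Proof.
move=> hl; apply/ffunP=> j; rewrite /side_state.
have := hl j; have := hl (inord j.-1).
case: c; rewrite !ffunE; case: j => [[|j] lt_j] /=; rewrite ?inordK ?(ltnW lt_j); lia.
Qed.

Lemma legal_add x a i (h : bool) : legal x a -> legal (add_at x i 1) (add_at a i h).
Proof. by move=> hl j; rewrite !ffunE; have := hl j; case: h; lia. Qed.

Lemma legal_add_inv x a (i : 'I_k.+1) :
  legal (add_at x i 1) a -> exists (h : bool) a', legal x a' /\ a = add_at a' i h.
Proof.
move=> hl; have := hl i; rewrite ffunE eqxx => hli.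
case: (ltnP (x i) (a i)) => hi; last first.
  exists false, a; split; last by apply/ffunP=> j; rewrite ffunE addn0.
  move=> j; have := hl j; rewrite ffunE.
  by case: eqP => [/ord_inj -> | _] /=; lia.
exists true, [ffun j => a j - (j == i :> nat)]; split.
  move=> j; have := hl j; rewrite !ffunE.
  by case: eqP => [/ord_inj -> | _] /=; lia.
by apply/ffunP=> j; rewrite !ffunE; case: eqP => [/ord_inj -> | _] /=; lia.
Qed.

Lemma weight_add x i n : weight (add_at x i n) = weight x + n * (i <= k).
Proof.
case: (leqP i k) => [ik | ki]; last by rewrite add_at_out // muln0 addn0.
rewrite /weight; under eq_bigr => j _ do rewrite ffunE.
rewrite big_split /= muln1; congr (_ + _).
rewrite (bigD1 (Ordinal (ik : i < k.+1))) //= eqxx muln1 big1 ?addn0 // => j.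
by move/negbTE; rewrite -val_eqE /= => ->; rewrite muln0.
Qed.

Lemma state_ind (P : state k -> Prop) :
  P [ffun => 0] -> (forall x (i : 'I_k.+1), P x -> P (add_at x i 1)) -> forall x, P x.
Proof.
move=> P0 PS x; have [n] := ubnP (weight x); elim: n x => // n IH x wx.
have [/forallP x0 | /forallPn[i xi]] := boolP [forall i, x i == 0].
  by have -> : x = [ffun => 0] by apply/ffunP=> i; rewrite ffunE; apply/eqP.
pose x' : state k := [ffun j => x j - (j == i :> nat)].
have ex : x = add_at x' i 1.
  apply/ffunP=> j; rewrite !ffunE.
  by move: xi; rewrite -lt0n; case: eqP => [/ord_inj -> | _] /=; lia.
have ik : i <= k by rewrite -ltnS.
by rewrite ex weight_add ik addn1 ltnS in wx *; apply/PS/IH.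
Qed.

Definition shape q (s : seq (nat * {set cube q})) : state k :=
  [ffun i : 'I_k.+1 => count (fun p => p.1 == i :> nat) s].

Definition balls q (s : seq (nat * {set cube q})) : Prop :=
  forall p, p \in s -> ball_at k p.1 p.2.

Definition multiplicity q (s : seq (nat * {set cube q})) (w : cube q) : nat :=
  count (fun p : nat * {set cube q} => w \in p.2) s.

Lemma shape_cons q j (S : {set cube q}) s : shape ((j, S) :: s) = add_at (shape s) j 1.
Proof. by apply/ffunP=> i; rewrite !ffunE /= addnC mul1n eq_sym. Qed.

Lemma balls_cons q j (S : {set cube q}) s :
  balls ((j, S) :: s) <-> ball_at k j S /\ balls s.
Proof.
split=> [bs | [bS bs] p]; last by rewrite inE => /predU1P[-> | /bs].
by split=> [|p ps]; [exact: (bs _ (mem_head _ _)) | apply: bs; rewrite inE ps orbT].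
Qed.

Lemma weight_shape q (s : seq (nat * {set cube q})) :
  weight (shape s) = count (fun p => p.1 <= k) s.
Proof.
elim: s => [|[j S] s IH]; last by rewrite shape_cons weight_add IH /= mul1n addnC.
by rewrite /weight big1 // => i _; rewrite ffunE.
Qed.

Lemma ball_at_shift q (i j : nat) (S : {set cube q}) :
  i <= k -> ball_at k (i + j) S <-> ball_at (k - i) j S.
Proof.
move=> ik; rewrite /ball_at; have -> : (i + j <= k) = (j <= k - i) by lia.
by rewrite subnDA.
Qed.

Lemma ball_at_slice q (i : nat) (S : {set cube q.+1}) :
  ball_at k i S -> exists h, forall c, ball_at k (i + (h (+) c)) (slice c S).
Proof.
rewrite {1}/ball_at; case: leqP => [ik | ki].
  case/quasiball_slice=> h hS; exists h => c; exact/ball_at_shift.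
move=> ->; exists false => c; rewrite /ball_at leqNgt ltn_addr //.
by apply/setP=> w; rewrite !inE.
Qed.

Lemma ball_at_glue q (i : nat) (h : bool) (T : bool -> {set cube q}) :
  (forall c, ball_at k (i + (h (+) c)) (T c)) -> ball_at k i (glue T).
Proof.
rewrite {2}/ball_at; case: leqP => [ik | ki] hT.
  by apply: (quasiball_glue (h := h)) => c; apply/ball_at_shift.
apply/setP=> w; rewrite !inE; have := hT (thead w).
by rewrite /ball_at leqNgt ltn_addr // => ->; rewrite inE.
Qed.

Lemma side_state0 c : side_state c [ffun => 0] [ffun => 0] = [ffun => 0].
Proof. by apply/ffunP=> i; case: c; rewrite !ffunE; case: ifP. Qed.

Lemma family_slice q (s : seq (nat * {set cube q.+1})) : balls s ->
  exists2 a, legal (shape s) a & forall c, exists t : seq (nat * {set cube q}),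
    [/\ shape t = side_state c (shape s) a, balls t &
        forall w, multiplicity t w = multiplicity s [tuple of c :: w]].
Proof.
elim: s => [_ | [i S] s IH /balls_cons[/ball_at_slice[h hS] /IH[a hl ht]]].
  exists [ffun => 0] => [j | c]; first by rewrite ffunE.
  by exists [::]; split=> //; rewrite side_state0; apply/ffunP=> j; rewrite !ffunE.
exists (add_at a i h) => [|c]; first by rewrite shape_cons; apply: legal_add.
have [t [et bt mt]] := ht c.
exists ((i + (h (+) c), slice c S) :: t); split.
- by rewrite !shape_cons side_state_add // et.
- exact/balls_cons.
- by move=> w; rewrite /multiplicity /= -/(multiplicity t w) mt inE.
Qed.

Lemma family_remove q (t : seq (nat * {set cube q})) y j :
  shape t = add_at y j 1 -> balls t ->
  exists S t', [/\ shape t' = y, balls t', ball_at k j S &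
                   forall w, multiplicity t w = (w \in S) + multiplicity t' w].
Proof.
move=> et bt; case: (leqP j k) => [jk | kj]; last first.
  exists set0, t; split=> //; first by rewrite et add_at_out.
  - by rewrite /ball_at leqNgt kj.
  - by move=> w; rewrite inE.
have /hasP[[j' S] St /eqP /= ej] : has (fun p => p.1 == j) t.
  have := congr1 (fun x : state k => x (Ordinal (jk : j < k.+1))) et.
  by rewrite !ffunE eqxx /= => e; rewrite has_count e addn1.
subst j'; have /permP pt := perm_to_rem St.
exists S, (rem (j, S) t); split.
- apply: (@add_at_inj _ _ j 1); rewrite -(shape_cons j S) -et.
  by apply/ffunP=> i; rewrite !ffunE pt.
- by move=> p /mem_rem; apply: bt.
- exact: bt St.
- by move=> w; rewrite /multiplicity pt.
Qed.

Lemma multiplicity_weight0 q (t : seq (nat * {set cube q})) w :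
  weight (shape t) = 0 -> balls t -> multiplicity t w = 0.
Proof.
rewrite weight_shape => /eqP; rewrite eqn0Ngt -has_count => /hasPn low bt.
apply/eqP; rewrite eqn0Ngt -has_count; apply/hasPn => -[j S] jS /=.
by have := bt _ jS; rewrite /ball_at /= (negbTE (low _ jS)) => ->; rewrite inE.
Qed.

Lemma family_glue q (x a : state k) (t : bool -> seq (nat * {set cube q})) :
  legal x a -> (forall c, shape (t c) = side_state c x a /\ balls (t c)) ->
  exists s, [/\ shape s = x, balls s &
    forall c (w : cube q), multiplicity s [tuple of c :: w] = multiplicity (t c) w].
Proof.
elim/state_ind: x a t => [|x i IH] a t hl ht.
  have a0 : a = [ffun => 0] by apply/ffunP=> j; have := hl j; rewrite !ffunE leqn0 => /eqP.
  exists [::]; split=> // c w.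
  have [et bt] := ht c; rewrite a0 side_state0 in et.
  have w0 : weight (shape (t c)) = 0 by rewrite et /weight big1 // => j; rewrite ffunE.
  by rewrite (multiplicity_weight0 w w0 bt).
have [h [a' [hl' ea]]] := legal_add_inv hl; subst a.
have /fin_all_exists[St hSt] :
    forall c, exists St : {set cube q} * seq (nat * {set cube q}),
    [/\ shape St.2 = side_state c x a', balls St.2, ball_at k (i + (h (+) c)) St.1 &
        forall w, multiplicity (t c) w = (w \in St.1) + multiplicity St.2 w].
  move=> c; have [et bt] := ht c; rewrite side_state_add // in et.
  by have [S [t' ?]] := family_remove et bt; exists (S, t').
have [s [es bs ms]] : exists s, [/\ shape s = x, balls s &
    forall c (w : cube q), multiplicity s [tuple of c :: w] = multiplicity (St c).2 w].
  by apply: IH hl' _ => c; case: (hSt c).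
exists ((val i, glue (fun c => (St c).1)) :: s); split.
- by rewrite shape_cons es.
- by apply/balls_cons; split=> //; apply: (ball_at_glue (h := h)) => c; case: (hSt c).
- move=> c w; have [_ _ _ ->] := hSt c.
  by rewrite /multiplicity /= -/(multiplicity s _) ms mem_glue.
Qed.

Definition exists_family (P : pred nat) q (x : state k) : Prop :=
  exists s : seq (nat * {set cube q}),
    [/\ shape s = x, balls s & forall w, P (multiplicity s w)].

Lemma exists_family_succ P q x :
  exists_family P q.+1 x <->
  exists a, legal x a /\
    exists_family P q (yes_state x a) /\ exists_family P q (no_state x a).
Proof.
split=> [[s [<- bs Ps]] | [a [hl [[sY [eY bY PY]] [sN [eN bN PN]]]]]].
  have [a hl ht] := family_slice bs; exists a; split=> //.
  have win c : exists_family P q (side_state c (shape s) a).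
    by have [t [et bt mt]] := ht c; exists t; split=> // w; rewrite mt.
  exact: (conj (win true) (win false)).
have [s [es bs ms]] : exists s, [/\ shape s = x, balls s &
    forall c (w : cube q),
      multiplicity s [tuple of c :: w] = multiplicity (if c then sY else sN) w].
  by apply: family_glue hl _ => -[].
by exists s; split=> // w; rewrite (tuple_eta w) ms; case: (thead w).
Qed.

Lemma exists_family0 P x : exists_family P 0 x <-> P (weight x).
Proof.
have multiplicity_cube0 s (w : cube 0) : balls s -> multiplicity s w = weight (shape s).
  move=> bs; rewrite weight_shape; apply: eq_in_count => -[j S] /bs; rewrite /ball_at /=.
  by case: leqP => _ => [/quasiball_cube0 | ] ->; rewrite inE.
split=> [[s [<- bs Ps]] | Px]; first by rewrite -(multiplicity_cube0 s [tuple]).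
have [s [es bs]] : exists s : seq (nat * {set cube 0}), shape s = x /\ balls s.
  elim/state_ind: x {Px} => [|x i [s [es bs]]].
    by exists [::]; split=> //; apply/ffunP=> i; rewrite !ffunE.
  exists ((val i, setT) :: s); split; first by rewrite shape_cons es.
  by apply/balls_cons; split=> //; rewrite /ball_at -ltnS ltn_ord; apply/quasiball_cube0.
by exists s; split=> // w; rewrite multiplicity_cube0 // es.
Qed.

Lemma win_iff_exists_family (W : nat -> state k -> Prop) (P : pred nat) :
  (forall x, W 0 x <-> P (weight x)) ->
  (forall q x, W q.+1 x <->
     exists a, legal x a /\ W q (yes_state x a) /\ W q (no_state x a)) ->
  forall q x, W q x <-> exists_family P q x.
Proof.
move=> W0 WS; elim=> [|q IH] x; first by rewrite W0 exists_family0.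
rewrite WS exists_family_succ.
by split=> -[a [hl [hY hN]]]; exists a; split=> //; split; apply/IH.
Qed.

(** * Indexed families *)

Definition tagged_family q (x : state k)
    (B : forall i : 'I_k.+1, 'I_(x i) -> {set cube q}) : seq (nat * {set cube q}) :=
  [seq (val (tag p), B (tag p) (tagged p)) | p <- enum {: {i : 'I_k.+1 & 'I_(x i)}}].

Lemma card_tag_sum (x : state k) (P : forall i : 'I_k.+1, pred 'I_(x i)) :
  #|[pred p : {i : 'I_k.+1 & 'I_(x i)} | P (tag p) (tagged p)]| = \sum_i #|P i|.
Proof.
transitivity (\sum_i \sum_(u | P i u) 1); last by apply: eq_bigr => i _; rewrite sum1_card.
by rewrite (sig_big_dep xpredT P (fun _ _ => 1)) -sum1_card.
Qed.

Lemma count_tagged_family q x (B : forall i : 'I_k.+1, 'I_(x i) -> {set cube q})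
    (P : pred (nat * {set cube q})) :
  count P (tagged_family B) = \sum_i #|[pred u : 'I_(x i) | P (val i, B i u)]|.
Proof. by rewrite count_map count_enum_card -card_tag_sum; apply: eq_card. Qed.

Lemma shape_tagged_family q x (B : forall i : 'I_k.+1, 'I_(x i) -> {set cube q}) :
  shape (tagged_family B) = x.
Proof.
apply/ffunP=> j; rewrite ffunE count_tagged_family (bigD1 j) //= eqxx.
rewrite (eq_card (B := predT)) // card_ord big1 ?addn0 // => i /negbTE ij.
by apply: eq_card0 => u; rewrite !inE; exact: ij.
Qed.

Lemma balls_tagged_family q x (B : forall i : 'I_k.+1, 'I_(x i) -> {set cube q}) :
  ball_family B -> balls (tagged_family B).
Proof. by move=> bB _ /mapP[[i u] _ ->]; rewrite /ball_at /= -ltnS ltn_ord; apply: bB. Qed.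

Lemma multiplicity_tagged_family q x (B : forall i : 'I_k.+1, 'I_(x i) -> {set cube q}) w :
  multiplicity (tagged_family B) w =
  #|[pred p : {i : 'I_k.+1 & 'I_(x i)} | w \in B (tag p) (tagged p)]|.
Proof. by rewrite /multiplicity count_map count_enum_card; apply: eq_card. Qed.

Lemma is_covering_multiplicity q x (B : forall i : 'I_k.+1, 'I_(x i) -> {set cube q}) :
  is_covering B <-> ball_family B /\ forall w, 0 < multiplicity (tagged_family B) w.
Proof.
split=> -[bB cB]; split=> // w; have := cB w; rewrite multiplicity_tagged_family.
  by case=> i [u wB]; apply/card_gt0P; exists (Tagged (fun i : 'I_k.+1 => 'I_(x i)) u).
by case/card_gt0P=> -[i u] wB; exists i, u.
Qed.

Lemma is_packing_multiplicity q x (B : forall i : 'I_k.+1, 'I_(x i) -> {set cube q}) :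
  is_packing B <-> ball_family B /\ forall w, multiplicity (tagged_family B) w <= 1.
Proof.
split=> -[bB pB]; split=> //; [move=> w | move=> i j u v neq].
  rewrite multiplicity_tagged_family; apply/card_le1_eqP => -[i u] [j v].
  rewrite !inE /= => wu wv.
  case: (boolP ((i != j) || (u != v :> nat))) => [/pB/disjointFr/(_ wu) | ].
    by rewrite wv.
  by rewrite negb_or !negbK => /andP[/eqP ij]; subst j => /eqP /ord_inj ->.
rewrite -setI_eq0; apply/eqP/setP=> w; rewrite !inE; apply/negP => /andP[wu wv].
have := pB w; rewrite multiplicity_tagged_family.
pose tag_u := Tagged (fun i : 'I_k.+1 => 'I_(x i)) u.
pose tag_v := Tagged (fun i : 'I_k.+1 => 'I_(x i)) v.
move=> /card_le1_eqP /(_ tag_u tag_v); rewrite !inE => /(_ wu wv).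
move/(congr1 (fun p : {i : 'I_k.+1 & 'I_(x i)} => (val (tag p), val (tagged p)))).
by case=> /ord_inj eij uv; subst j; move: neq; rewrite eqxx uv eqxx.
Qed.

Definition level_sets q (s : seq (nat * {set cube q})) (i : nat) : seq {set cube q} :=
  [seq p.2 | p <- s & p.1 == i].

Definition level_family q (s : seq (nat * {set cube q}))
    (i : 'I_k.+1) (u : 'I_(shape s i)) : {set cube q} :=
  nth set0 (level_sets s i) u.
Arguments level_family {q} s i u.

Lemma size_level_sets q (s : seq (nat * {set cube q})) (i : 'I_k.+1) :
  size (level_sets s i) = shape s i.
Proof. by rewrite size_map size_filter ffunE. Qed.

Lemma ball_family_level q (s : seq (nat * {set cube q})) :
  balls s -> ball_family (level_family s).
Proof.
move=> bs i u; have : level_family s i u \in level_sets s i.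
  by rewrite mem_nth ?size_level_sets.
case/mapP=> -[j S]; rewrite mem_filter /= => /andP[/eqP -> jS] ->.
by have := bs _ jS; rewrite /ball_at /= -ltnS ltn_ord.
Qed.

Lemma multiplicity_level_family q (s : seq (nat * {set cube q})) w :
  balls s -> multiplicity (tagged_family (level_family s)) w = multiplicity s w.
Proof.
move=> bs; rewrite /multiplicity count_tagged_family.
set sw := [seq p : nat * {set cube q} <- s | w \in p.2].
transitivity (weight (shape sw)); last first.
  rewrite weight_shape count_filter; apply: eq_in_count => -[j S] /bs.
  by rewrite /ball_at /=; case: leqP => // _ ->; rewrite inE andbF.
apply: eq_bigr => i _.
transitivity (count (fun S : {set cube q} => w \in S) (level_sets s i)).
  exact: card_nth (esym (size_level_sets s i)).
by rewrite ffunE count_map !count_filter; apply: eq_count => p; rewrite /= andbC.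
Qed.

Lemma exists_family_tagged P q x :
  exists_family P q x <->
  exists B, ball_family B /\ forall w, P (multiplicity (@tagged_family q x B) w).
Proof.
split=> [[s [<- bs Ps]] | [B [bB PB]]].
  exists (level_family s); split=> [|w]; first exact: ball_family_level.
  by rewrite multiplicity_level_family.
exists (tagged_family B); split=> //.
  exact: shape_tagged_family.
exact: balls_tagged_family.
Qed.
End Families.

Lemma exists_covering_iff q k (x : state k) :
  (exists B : forall i : 'I_k.+1, 'I_(x i) -> {set cube q}, is_covering B) <->
  exists_family (fun n => 0 < n) q x.
Proof.
rewrite exists_family_tagged.
by split=> -[B hB]; exists B; apply/is_covering_multiplicity.
Qed.

Lemma exists_packing_iff q k (x : state k) :
  (exists B : forall i : 'I_k.+1, 'I_(x i) -> {set cube q}, is_packing B) <->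
  exists_family (fun n => n <= 1) q x.
Proof.
rewrite exists_family_tagged.
by split=> -[B hB]; exists B; apply/is_packing_multiplicity.
Qed.

Theorem theorem19 (q k : nat) (x : state k) :
  (path_win q x <->
     exists B : forall i : 'I_k.+1, 'I_(x i) -> {set cube q}, is_covering B) /\
  (orig_win q x <->
     exists B : forall i : 'I_k.+1, 'I_(x i) -> {set cube q}, is_packing B).
Proof.
by split; [rewrite exists_covering_iff | rewrite exists_packing_iff];
  apply: win_iff_exists_family.
Qed.
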